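(* Let $q_0\in\mathbb{R}$ with $q_0<-\frac{\pi^2}{4}$, and consider the Dirichlet problem $$-y''+q_0\,y=\lambda\, w(x)\,y,\quad -1\le x\le 1,\qquad y(-1)=y(1)=0,$$ where $w(x)=1$ for $x\ge 0$ and $w(x)=-1$ for $x<0$. Then the Richardson number $\lambda^-$ of this problem satisfies $\lambda^-\ge -|q_0|+\frac{\pi^2}{4}$. Equivalently: for every real eigenvalue $\lambda<-|q_0|+\frac{\pi^2}{4}$ of this problem and every corresponding nontrivial eigenfunction $u$, one has $\int_{-1}^1 w(x)|u(x)|^2\,dx<0$.
   Context: Solutions are understood as $C^1$ functions on $[-1,1]$ with absolutely continuous derivative satisfying the equation almost everywhere. For a regular Dirichlet problem $y''+(\lambda w+q)y=0$ on $[a,b]$, $y(a)=y(b)=0$, with real piecewise continuous $w,q$, the Richardson numbers are $$\lambda^+=\inf\Big\{\rho\in\mathbb{R}:\ \text{for every real eigenvalue }\lambda>\rho\text{ and every eigenfunction }u\text{ for }\lambda,\ \int_a^b w|u|^2\,dx>0\Big\},$$ $$\lambda^-=\sup\Big\{\rho\in\mathbb{R}:\ \text{for every real eigenvalue }\lambda<\rho\text{ and every eigenfunction }u\text{ for }\lambda,\ \int_a^b w|u|^2\,dx<0\Big\}.$$ *)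

From Stdlib Require Import Reals List.
Import ListNotations.
Open Scope R_scope.

Definition has_deriv_on (a b : R) (f f' : R -> R) : Prop :=
  forall x, a <= x <= b ->
  forall eps, 0 < eps -> exists delta, 0 < delta /\
    forall h, h <> 0 -> Rabs h < delta -> a <= x + h <= b ->
      Rabs ((f (x + h) - f x) / h - f' x) < eps.

Fixpoint nonoverlap (lo : R) (l : list (R * R)) (hi : R) : Prop :=
  match l with
  | [] => lo <= hi
  | (x, y) :: t => lo <= x /\ x <= y /\ nonoverlap y t hi
  end.

Fixpoint total_length (l : list (R * R)) : R :=
  match l with
  | [] => 0
  | (x, y) :: t => (y - x) + total_length t
  end.

Fixpoint total_variation (f : R -> R) (l : list (R * R)) : R :=
  match l with
  | [] => 0
  | (x, y) :: t => Rabs (f y - f x) + total_variation f t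
  end.

Definition abs_continuous_on (a b : R) (f : R -> R) : Prop :=
  forall eps, 0 < eps -> exists delta, 0 < delta /\
    forall l, nonoverlap a l b -> total_length l < delta ->
      total_variation f l < eps.

Definition null_set (N : R -> Prop) : Prop :=
  forall eps, 0 < eps -> exists a b : nat -> R,
    (forall n, a n <= b n) /\
    (forall x, N x -> exists n, a n < x < b n) /\
    (forall n, sum_f_R0 (fun k => b k - a k) n <= eps).

(* y is a solution on [a,b] of y'' + (lam w + q) y = 0: y is C^1 with
   absolutely continuous derivative and the equation holds a.e. *)
Definition is_solution (a b : R) (w q : R -> R) (lam : R) (y : R -> R) : Prop :=
  exists y' : R -> R,
    has_deriv_on a b y y' /\
    abs_continuous_on a b y' /\
    exists N, null_set N /\
      forall x, a < x < b -> ~ N x ->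
        derivable_pt_lim y' x (- (lam * w x + q x) * y x).

(* (u1, u2) = real and imaginary parts of a (complex-valued) eigenfunction
   of the Dirichlet problem y'' + (lam w + q) y = 0, y(a) = y(b) = 0. *)
Definition is_eigenfunction (a b : R) (w q : R -> R) (lam : R)
    (u1 u2 : R -> R) : Prop :=
  is_solution a b w q lam u1 /\ is_solution a b w q lam u2 /\
  u1 a = 0 /\ u2 a = 0 /\ u1 b = 0 /\ u2 b = 0 /\
  exists x, a <= x <= b /\ (u1 x <> 0 \/ u2 x <> 0).

(* rho belongs to the set whose supremum is the Richardson number lambda^- :
   every eigenfunction for a real eigenvalue lam < rho has
   int_a^b w |u|^2 < 0. *)
Definition richardson_minus_set (a b : R) (w q : R -> R) (rho : R) : Prop :=
  forall lam u1 u2, lam < rho -> is_eigenfunction a b w q lam u1 u2 ->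
    exists pr : Riemann_integrable
                  (fun x => w x * (u1 x ^ 2 + u2 x ^ 2)) a b,
      RiemannInt pr < 0.

(* lambda^- >= c, i.e. sup (richardson_minus_set) >= c in extended reals. *)
Definition richardson_minus_ge (a b : R) (w q : R -> R) (c : R) : Prop :=
  forall c', c' < c -> exists rho, c' < rho /\ richardson_minus_set a b w q rho.

Definition w_sign (x : R) : R := if Rle_dec 0 x then 1 else -1.

(* Let lam < -|q0| + pi^2/4 = q0 + pi^2/4 and let u be a real
   solution vanishing at -1 and 1 (real and imaginary parts of an
   eigenfunction are treated separately).  On each half of [-1,1] the equation
   has constant coefficients: u'' + muR u = 0 on [0,1] with muR = lam - q0 <
   pi^2/4, and u'' + muL u = 0 on [-1,0] with muL = -lam - q0 > 0.  Hence u is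
   an explicit multiple of a generalized sine on each half, with u, u'
   matching at 0, and an explicit computation of the two masses
   int u^2 shows that the mass on [0,1] is at most the mass on [-1,0],
   strictly unless u = 0.  Summing over real and imaginary parts gives
   int w |u|^2 < 0.

   The solution notion is weak (u' absolutely continuous, equation a.e.), so
   the explicit form needs a uniqueness argument: the Wronskian of u with a
   classical solution is absolutely continuous with zero derivative a.e.,
   hence constant. *)

From Stdlib Require Import Reals Lra List Classical.
From Coquelicot Require Import Coquelicot.
Import ListNotations.
Open Scope R_scope.

Lemma nonoverlap_le l x y : nonoverlap x l y -> x <= y.
Proof.
  revert x; induction l as [|[p q] t IH]; simpl; intros x H; [lra|].
  destruct H as [? [? H]]. apply IH in H. lra.
Qed.

Lemma nonoverlap_app l1 l2 x y z :
  nonoverlap x l1 y -> nonoverlap y l2 z -> nonoverlap x (l1 ++ l2) z.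
Proof.
  revert x; induction l1 as [|[p q] t IH]; simpl; intros x H1 H2.
  - pose proof (nonoverlap_le _ _ _ H2).
    destruct l2 as [|[p q] t]; simpl in *; [lra|]. destruct H2 as [? [? ?]]. repeat split; auto; lra.
  - destruct H1 as [? [? ?]]. repeat split; auto.
Qed.

Lemma nonoverlap_widen l x y a b :
  nonoverlap x l y -> a <= x -> y <= b -> nonoverlap a l b.
Proof.
  revert x a; induction l as [|[p q] t IH]; simpl; intros x a H Ha Hb; [lra|].
  destruct H as [? [? H]]. repeat split; [lra|auto|]. eapply IH; eauto; lra.
Qed.

Lemma total_length_app l1 l2 :
  total_length (l1 ++ l2) = total_length l1 + total_length l2.
Proof. induction l1 as [|[p q] t IH]; simpl; [lra|rewrite IH; lra]. Qed.

Lemma total_variation_app f l1 l2 :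
  total_variation f (l1 ++ l2) = total_variation f l1 + total_variation f l2.
Proof. induction l1 as [|[p q] t IH]; simpl; [lra|rewrite IH; lra]. Qed.

Lemma total_length_nonneg l x y : nonoverlap x l y -> 0 <= total_length l.
Proof.
  revert x; induction l as [|[p q] t IH]; simpl; intros x H; [lra|].
  destruct H as [? [? H]]. specialize (IH _ H). lra.
Qed.

Lemma total_variation_nonneg f l : 0 <= total_variation f l.
Proof.
  induction l as [|[p q] t IH]; simpl; [lra|]. pose proof (Rabs_pos (f q - f p)). lra.
Qed.

(** Cousin's lemma in the form of an induction principle: a property of
    subintervals that is additive and holds on all sufficiently small intervals
    around each point of [c,d] holds on [c,d]. *)
Lemma cousin_ind (c d : R) (P : R -> R -> Prop) :
  c <= d ->
  (forall x y z, c <= x -> x <= y -> y <= z -> z <= d -> P x y -> P y z -> P x z) ->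
  (forall t, c <= t <= d -> exists r, 0 < r /\
      forall x y, c <= x -> x <= t -> t <= y -> y <= d -> y - x < r -> P x y) ->
  P c d.
Proof.
  intros Hcd Hadd Hloc.
  set (E := fun s => c <= s <= d /\ P c s).
  assert (Ec : E c).
  { split; [lra|]. destruct (Hloc c) as [r [Hr H]]; [lra|]. apply H; lra. }
  assert (Hb : bound E) by (exists d; intros s [Hs _]; lra).
  destruct (completeness E Hb (ex_intro _ c Ec)) as [s0 [Hub Hlub]].
  assert (Hs0c : c <= s0) by (apply Hub; auto).
  assert (Hs0d : s0 <= d) by (apply Hlub; intros s [Hs _]; lra).
  destruct (Hloc s0) as [r [Hr Hl]]; [lra|].
  assert (Hnear : exists s, E s /\ s0 - r / 2 < s).
  { apply NNPP. intro Hn. assert (s0 <= s0 - r / 2); [|lra].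
    apply Hlub. intros s Es. apply Rnot_lt_le. intro Hlt. apply Hn. exists s; auto. }
  destruct Hnear as [s [[Hs Ps] Hs0s]].
  assert (Hss0 : s <= s0) by (apply Hub; split; auto).
  (* hence P c s1 for s1 = min d (s0 + r/2), forcing s1 <= s0, i.e. s0 = d *)
  pose proof (Rmin_l d (s0 + r / 2)). pose proof (Rmin_r d (s0 + r / 2)).
  assert (Hs1 : s0 <= Rmin d (s0 + r / 2)) by (apply Rmin_glb; lra).
  set (s1 := Rmin d (s0 + r / 2)) in *.
  assert (Ps1 : P c s1) by (apply Hadd with s; try lra; auto; apply Hl; lra).
  assert (s1 <= s0) by (apply Hub; split; [lra|auto]).
  replace d with s1; auto.
  unfold s1, Rmin in *. destruct (Rle_dec d (s0 + r / 2)); lra.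
Qed.

Lemma eq0_of_le_eps (z K : R) :
  0 <= K -> (forall eps, 0 < eps -> Rabs z <= eps * K) -> z = 0.
Proof.
  intros HK H. destruct (Req_dec z 0) as [|Hz]; auto. exfalso.
  pose proof (Rabs_pos_lt z Hz).
  assert (Heps : 0 < Rabs z / (2 * (K + 1))) by (apply Rdiv_lt_0_compat; lra).
  specialize (H _ Heps).
  assert (Rabs z / (2 * (K + 1)) * (K + 1) = Rabs z / 2) by (field; lra).
  nra.
Qed.

(** Bookkeeping for a countable cover by intervals (a n, b n):
    [cover_tail a b n x] is the length of (a n, b n) to the right of x and
    [cover_budget a b M x] sums it over n <= M.  The drop of the budget
    between x <= y bounds the total length of cover intervals used in [x,y]. *)
Definition cover_tail (a b : nat -> R) (n : nat) (x : R) : R :=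
  Rmax 0 (b n - Rmax (a n) x).

Definition cover_budget (a b : nat -> R) (M : nat) (x : R) : R :=
  sum_f_R0 (fun n => cover_tail a b n x) M.

Lemma cover_tail_antitone a b n x y : x <= y -> cover_tail a b n y <= cover_tail a b n x.
Proof.
  intro H. unfold cover_tail. unfold Rmax at 2 4.
  destruct (Rle_dec (a n) y), (Rle_dec (a n) x); apply Rle_max_compat_l; lra.
Qed.

Lemma cover_budget_S a b M x :
  cover_budget a b (S M) x = cover_budget a b M x + cover_tail a b (S M) x.
Proof. reflexivity. Qed.

Lemma cover_budget_drop_nonneg a b M x y :
  x <= y -> 0 <= cover_budget a b M x - cover_budget a b M y.
Proof.
  intro H. induction M as [|M IH].
  - unfold cover_budget; simpl. pose proof (cover_tail_antitone a b 0 x y H). lra.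
  - rewrite !cover_budget_S. pose proof (cover_tail_antitone a b (S M) x y H). lra.
Qed.

Lemma cover_budget_drop_mono a b M M' x y : x <= y -> (M <= M')%nat ->
  cover_budget a b M x - cover_budget a b M y <= cover_budget a b M' x - cover_budget a b M' y.
Proof.
  intros H HM. induction HM; [lra|].
  rewrite !cover_budget_S. pose proof (cover_tail_antitone a b (S m) x y H). lra.
Qed.

Lemma cover_budget_drop_term a b k x y : x <= y ->
  cover_tail a b k x - cover_tail a b k y <= cover_budget a b k x - cover_budget a b k y.
Proof.
  intro H. destruct k as [|k]; [unfold cover_budget; simpl; lra|].
  rewrite !cover_budget_S. pose proof (cover_budget_drop_nonneg a b k x y H). lra.
Qed.

Lemma cover_budget_le a b M x : (forall n, a n <= b n) ->
  cover_budget a b M x <= sum_f_R0 (fun n => b n - a n) M.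
Proof.
  intro Hab. apply sum_Rle. intros n _. unfold cover_tail.
  apply Rmax_lub; [specialize (Hab n); lra|]. pose proof (Rmax_l (a n) x). lra.
Qed.

Lemma cover_budget_nonneg a b M x : 0 <= cover_budget a b M x.
Proof. apply cond_pos_sum. intro; apply Rmax_l. Qed.

Lemma AC_cont a b f t : abs_continuous_on a b f -> a <= t <= b ->
  forall eps, 0 < eps -> exists r, 0 < r /\
    forall z, a <= z <= b -> Rabs (z - t) < r -> Rabs (f z - f t) < eps.
Proof.
  intros H Ht eps Heps. destruct (H eps Heps) as [r [Hr Hl]]. exists r. split; auto.
  intros z Hz Hzt. destruct (Rle_dec t z).
  - specialize (Hl [(t, z)]). simpl in Hl. rewrite Rabs_right in Hzt by lra.
    assert (Rabs (f z - f t) + 0 < eps) by (apply Hl; lra). lra.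
  - specialize (Hl [(z, t)]). simpl in Hl. rewrite Rabs_left1 in Hzt by lra.
    rewrite Rabs_minus_sym. assert (Rabs (f t - f z) + 0 < eps) by (apply Hl; lra). lra.
Qed.

Lemma AC_restrict a b c d f : abs_continuous_on a b f -> a <= c -> d <= b ->
  abs_continuous_on c d f.
Proof.
  intros H Hac Hdb eps Heps. destruct (H eps Heps) as [r [Hr Hl]]. exists r. split; auto.
  intros l Hl' Hlen. apply Hl; auto. eapply nonoverlap_widen; eauto.
Qed.

(** [eps_controlled F eps a b x y]: on [x,y], F grows at rate eps except on a
    family L of intervals, whose length is paid for by the cover budget and
    whose contribution to the growth is the variation of F on L. *)
Definition eps_controlled (F : R -> R) (eps : R) (a b : nat -> R) (x y : R) : Prop :=
  exists (L : list (R * R)) (M : nat), nonoverlap x L y /\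
    Rabs (F y - F x) <= eps * (y - x) + total_variation F L /\
    total_length L <= cover_budget a b M x - cover_budget a b M y.

Lemma eps_controlled_additive F eps a b x y z : x <= y -> y <= z ->
  eps_controlled F eps a b x y -> eps_controlled F eps a b y z ->
  eps_controlled F eps a b x z.
Proof.
  intros Hxy Hyz [L1 [M1 [H1 [H2 H3]]]] [L2 [M2 [H4 [H5 H6]]]].
  exists (L1 ++ L2), (Nat.max M1 M2). split; [eapply nonoverlap_app; eauto|].
  rewrite total_variation_app, total_length_app. split.
  - replace (F z - F x) with ((F z - F y) + (F y - F x)) by ring.
    eapply Rle_trans; [apply Rabs_triang|]. lra.
  - pose proof (cover_budget_drop_mono a b M1 _ x y Hxy (Nat.le_max_l M1 M2)).
    pose proof (cover_budget_drop_mono a b M2 _ y z Hyz (Nat.le_max_r M1 M2)).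
    lra.
Qed.

(** Near a point t of the cover interval (a n, b n), the small interval [x,y]
    itself is put into the exceptional family. *)
Lemma eps_controlled_covered F eps a b n t : 0 <= eps -> a n < t < b n ->
  exists r, 0 < r /\ forall x y, x <= t -> t <= y -> y - x < r ->
    eps_controlled F eps a b x y.
Proof.
  intros Heps Hn. exists (Rmin (t - a n) (b n - t)). split; [apply Rmin_glb_lt; lra|].
  intros x y Hxt Hty Hr.
  pose proof (Rmin_l (t - a n) (b n - t)). pose proof (Rmin_r (t - a n) (b n - t)).
  exists [(x, y)], n. simpl. split; [lra|]. split.
  - pose proof (Rabs_pos (F y - F x)). nra.
  - pose proof (cover_budget_drop_term a b n x y ltac:(lra)).
    enough (cover_tail a b n x - cover_tail a b n y = y - x) by lra.
    unfold cover_tail. rewrite (Rmax_right (a n) x), (Rmax_right (a n) y) by lra.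
    rewrite !Rmax_right by lra. ring.
Qed.

(** Near a point t where F'(t) = 0, F is eps-Lipschitz at t; no exceptional
    interval is needed. *)
Lemma eps_controlled_flat F eps a b t : 0 < eps -> derivable_pt_lim F t 0 ->
  exists r, 0 < r /\ forall x y, x <= t -> t <= y -> y - x < r ->
    eps_controlled F eps a b x y.
Proof.
  intros Heps HD. destruct (HD eps Heps) as [r Hr].
  exists r. split; [apply cond_pos|]. intros x y Hxt Hty Hxy.
  assert (Hloc : forall z, Rabs (z - t) < r -> Rabs (F z - F t) <= eps * Rabs (z - t)).
  { intros z Hz. destruct (Req_dec z t) as [->|Hzt].
    - rewrite !Rminus_diag, Rabs_R0. lra.
    - specialize (Hr (z - t) ltac:(lra) Hz).
      replace (t + (z - t)) with z in Hr by ring. rewrite Rminus_0_r in Hr.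
      replace (F z - F t) with ((F z - F t) / (z - t) * (z - t)) by (field; lra).
      rewrite Rabs_mult. apply Rmult_le_compat_r; [apply Rabs_pos|lra]. }
  exists [], 0%nat. simpl. split; [lra|]. split.
  - replace (F y - F x) with ((F y - F t) - (F x - F t)) by ring.
    eapply Rle_trans; [apply Rabs_triang|]. rewrite Rabs_Ropp.
    pose proof (Hloc y ltac:(rewrite Rabs_right; lra)) as Hy.
    pose proof (Hloc x ltac:(rewrite Rabs_left1; lra)) as Hx.
    rewrite (Rabs_right (y - t)) in Hy by lra.
    rewrite (Rabs_left1 (x - t)) in Hx by lra. nra.
  - apply cover_budget_drop_nonneg; lra.
Qed.

(** An absolutely continuous function whose derivative vanishes outside a null
    set is constant on the open interval: for each eps, cover the null set with
    intervals of total length below the AC modulus; Cousin's lemma makes [c,d]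
    eps-controlled, so |F d - F c| <= eps (d - c) + eps. *)
Lemma AC_zero_deriv_const_open a b F N :
  abs_continuous_on a b F -> null_set N ->
  (forall x, a < x < b -> ~ N x -> derivable_pt_lim F x 0) ->
  forall c d, a < c -> c <= d -> d < b -> F c = F d.
Proof.
  intros HAC HN HD c d Hac Hcd Hdb.
  apply Rminus_diag_uniq_sym, (eq0_of_le_eps _ (d - c + 1)); [lra|].
  intros eps Heps.
  destruct (HAC eps Heps) as [delta [Hdel Hmod]].
  destruct (HN (delta / 2)) as [an [bn [Hab [Hcov Hsum]]]]; [lra|].
  assert (HP : eps_controlled F eps an bn c d).
  { apply cousin_ind; auto.
    - intros x y z _ Hxy Hyz _. apply eps_controlled_additive; auto.
    - intros t Ht.
      assert (Hgauge : exists r, 0 < r /\ forall x y, x <= t -> t <= y -> y - x < r ->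
                         eps_controlled F eps an bn x y).
      { destruct (classic (N t)) as [HNt|HNt].
        - destruct (Hcov t HNt) as [n Hn]. apply (eps_controlled_covered F eps an bn n t); auto; lra.
        - apply eps_controlled_flat; auto. apply HD; auto; lra. }
      destruct Hgauge as [r [Hr Hg]]. exists r. split; auto. }
  destruct HP as [L [M [HL [HF Hlen]]]].
  assert (total_length L < delta).
  { pose proof (cover_budget_nonneg an bn M d). pose proof (cover_budget_le an bn M c Hab).
    specialize (Hsum M). lra. }
  specialize (Hmod L ltac:(eapply nonoverlap_widen; eauto; lra) H).
  lra.
Qed.

(** Constancy on the open interval extends to the closed one by continuity:
    every point is approached by interior points c (toward the midpoint m). *)
Lemma AC_const_closure a b F : a < b -> abs_continuous_on a b F ->
  (forall c d, a < c -> c <= d -> d < b -> F c = F d) ->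
  forall x z, a <= x <= b -> a <= z <= b -> F x = F z.
Proof.
  intros Hab HAC Hint.
  set (m := (a + b) / 2).
  assert (Hm : forall x, a <= x <= b -> F x = F m).
  { intros x Hx. apply Rminus_diag_uniq, (eq0_of_le_eps _ 1); [lra|].
    intros eps Heps. destruct (AC_cont a b F x HAC Hx eps Heps) as [r [Hr Hl]].
    set (h := Rmin (1 / 2) (r / (b - a))).
    assert (Hh0 : 0 < h) by (apply Rmin_glb_lt; [lra|apply Rdiv_lt_0_compat; lra]).
    assert (Hh1 : h <= 1 / 2) by apply Rmin_l.
    assert (Hhr : h * (b - a) <= r).
    { apply Rle_trans with (r / (b - a) * (b - a)); [apply Rmult_le_compat_r; [lra|apply Rmin_r]|].
      right; field; lra. }
    set (c := x + (m - x) * h).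
    assert (Hc : a < c < b) by (unfold c, m in *; split; nra).
    assert (Fc : F c = F m).
    { destruct (Rle_dec c m); [|symmetry]; apply Hint; unfold m in *; lra. }
    assert (Hcx : Rabs (c - x) < r).
    { unfold c. replace (x + (m - x) * h - x) with ((m - x) * h) by ring.
      rewrite Rabs_mult, (Rabs_right h) by lra.
      assert (Rabs (m - x) <= (b - a) / 2) by (unfold m; apply Rabs_le; lra). nra. }
    specialize (Hl c ltac:(lra) Hcx). rewrite Fc, Rabs_minus_sym in Hl. lra. }
  intros x z Hx Hz. rewrite (Hm x Hx), (Hm z Hz). auto.
Qed.

Lemma AC_zero_deriv_const a b F N : a < b ->
  abs_continuous_on a b F -> null_set N ->
  (forall x, a < x < b -> ~ N x -> derivable_pt_lim F x 0) ->
  forall x z, a <= x <= b -> a <= z <= b -> F x = F z.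
Proof.
  intros Hab HAC HN HD. apply AC_const_closure; auto.
  exact (AC_zero_deriv_const_open a b F N HAC HN HD).
Qed.

Lemma has_deriv_on_interior a b f f' x :
  has_deriv_on a b f f' -> a < x < b -> derivable_pt_lim f x (f' x).
Proof.
  intros H Hx eps Heps. destruct (H x ltac:(lra) eps Heps) as [d [Hd Hl]].
  exists (mkposreal (Rmin d (Rmin (x - a) (b - x))) ltac:(repeat apply Rmin_glb_lt; lra)).
  simpl. intros h Hh Hhd.
  pose proof (Rmin_l d (Rmin (x - a) (b - x))). pose proof (Rmin_r d (Rmin (x - a) (b - x))).
  pose proof (Rmin_l (x - a) (b - x)). pose proof (Rmin_r (x - a) (b - x)).
  apply Hl; auto; [lra|]. unfold Rabs in Hhd; destruct (Rcase_abs h); lra.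
Qed.

Lemma has_deriv_on_of_deriv a b f f' :
  (forall x, derivable_pt_lim f x (f' x)) -> has_deriv_on a b f f'.
Proof.
  intros H x _ eps Heps. destruct (H x eps Heps) as [d Hd]. exists d.
  split; [apply cond_pos|]. intros h Hh Hhd _. apply Hd; auto.
Qed.

Lemma has_deriv_on_restrict a b c d f f' : has_deriv_on a b f f' -> a <= c -> d <= b ->
  has_deriv_on c d f f'.
Proof.
  intros H Hac Hdb x Hx eps Heps. destruct (H x ltac:(lra) eps Heps) as [r [Hr Hl]].
  exists r. split; auto. intros h Hh Hhr Hxh. apply Hl; auto; lra.
Qed.

Lemma has_deriv_on_local a b f f' t : has_deriv_on a b f f' -> a <= t <= b ->
  exists r, 0 < r /\ forall z, a <= z <= b -> Rabs (z - t) < r ->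
    Rabs (f z - f t) <= (Rabs (f' t) + 1) * Rabs (z - t).
Proof.
  intros H Ht. destruct (H t Ht 1 ltac:(lra)) as [r [Hr Hl]]. exists r. split; auto.
  intros z Hz Hzt. destruct (Req_dec z t) as [->|Hne].
  - rewrite !Rminus_diag, Rabs_R0. lra.
  - specialize (Hl (z - t) ltac:(lra) Hzt).
    replace (t + (z - t)) with z in Hl by ring. specialize (Hl Hz).
    replace (f z - f t) with ((f z - f t) / (z - t) * (z - t)) by (field; lra).
    rewrite Rabs_mult. apply Rmult_le_compat_r; [apply Rabs_pos|].
    replace ((f z - f t) / (z - t)) with (((f z - f t) / (z - t) - f' t) + f' t) by ring.
    eapply Rle_trans; [apply Rabs_triang|]. lra.
Qed.

Lemma bounded_of_locally_bounded a b f : a <= b ->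
  (forall t, a <= t <= b -> exists r, 0 < r /\
     forall z, a <= z <= b -> Rabs (z - t) < r -> Rabs (f z - f t) <= 1) ->
  exists K, forall z, a <= z <= b -> Rabs (f z) <= K.
Proof.
  intros Hab Hl.
  apply (cousin_ind a b (fun x y => exists K, forall z, x <= z <= y -> Rabs (f z) <= K)); auto.
  - intros x y z _ _ _ _ [K1 H1] [K2 H2]. exists (Rmax K1 K2). intros s Hs.
    destruct (Rle_dec s y).
    + eapply Rle_trans; [apply H1; lra|apply Rmax_l].
    + eapply Rle_trans; [apply H2; lra|apply Rmax_r].
  - intros t Ht. destruct (Hl t Ht) as [r [Hr H]]. exists r. split; auto.
    intros x y Hax Hxt Hty Hyb Hxy. exists (Rabs (f t) + 1). intros z Hz.
    assert (Rabs (f z - f t) <= 1) by (apply H; [lra|apply Rabs_def1; lra]).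
    replace (f z) with ((f z - f t) + f t) by ring.
    eapply Rle_trans; [apply Rabs_triang|]. lra.
Qed.

Lemma has_deriv_on_bounded a b f f' : a <= b -> has_deriv_on a b f f' ->
  exists K, forall z, a <= z <= b -> Rabs (f z) <= K.
Proof.
  intros Hab H. apply bounded_of_locally_bounded; auto. intros t Ht.
  destruct (has_deriv_on_local a b f f' t H Ht) as [r [Hr Hl]].
  pose proof (Rabs_pos (f' t)).
  exists (Rmin r (/ (Rabs (f' t) + 1))).
  split; [apply Rmin_glb_lt; auto; apply Rinv_0_lt_compat; lra|].
  intros z Hz Hzt.
  pose proof (Rmin_l r (/ (Rabs (f' t) + 1))). pose proof (Rmin_r r (/ (Rabs (f' t) + 1))).
  eapply Rle_trans; [apply Hl; auto; lra|].
  apply Rle_trans with ((Rabs (f' t) + 1) * / (Rabs (f' t) + 1)).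
  - apply Rmult_le_compat_l; lra.
  - right; field; lra.
Qed.

Lemma AC_bounded a b f : a <= b -> abs_continuous_on a b f ->
  exists K, forall z, a <= z <= b -> Rabs (f z) <= K.
Proof.
  intros Hab H. apply bounded_of_locally_bounded; auto. intros t Ht.
  destruct (AC_cont a b f t H Ht 1 ltac:(lra)) as [r [Hr Hl]]. exists r. split; auto.
  intros z Hz Hzt. left; auto.
Qed.

Lemma lipschitz_of_deriv a b f f' K : has_deriv_on a b f f' ->
  (forall x, a <= x <= b -> Rabs (f' x) <= K) ->
  forall x y, a <= x -> x <= y -> y <= b -> Rabs (f y - f x) <= (K + 1) * (y - x).
Proof.
  intros H HK x y Hax Hxy Hyb.
  apply (cousin_ind x y (fun s t => Rabs (f t - f s) <= (K + 1) * (t - s))); auto.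
  - intros s t z _ _ _ _ H1 H2. replace (f z - f s) with ((f z - f t) + (f t - f s)) by ring.
    eapply Rle_trans; [apply Rabs_triang|]. lra.
  - intros t Ht. destruct (has_deriv_on_local a b f f' t H ltac:(lra)) as [r [Hr Hl]].
    exists r. split; auto. intros s z Hs Hst Htz Hz Hr'.
    pose proof (HK t ltac:(lra)).
    pose proof (Hl z ltac:(lra) ltac:(rewrite Rabs_right; lra)) as Hzt.
    pose proof (Hl s ltac:(lra) ltac:(rewrite Rabs_left1; lra)) as Hst'.
    rewrite (Rabs_right (z - t)) in Hzt by lra. rewrite (Rabs_left1 (s - t)) in Hst' by lra.
    replace (f z - f s) with ((f z - f t) - (f s - f t)) by ring.
    eapply Rle_trans; [apply Rabs_triang|]. rewrite Rabs_Ropp.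
    pose proof (Rabs_pos (f' t)). nra.
Qed.

Lemma AC_of_lipschitz c d f K : 0 <= K ->
  (forall x y, c <= x -> x <= y -> y <= d -> Rabs (f y - f x) <= K * (y - x)) ->
  abs_continuous_on c d f.
Proof.
  intros HK Hf eps Heps. exists (eps / (K + 1)). split; [apply Rdiv_lt_0_compat; lra|].
  intros l Hl Hlen.
  assert (Htv : forall l lo, c <= lo -> nonoverlap lo l d ->
            total_variation f l <= K * total_length l).
  { clear l Hl Hlen. induction l as [|[x y] t IH]; simpl; intros lo Hlo Hn; [lra|].
    destruct Hn as [H1 [H2 H3]]. pose proof (nonoverlap_le _ _ _ H3).
    pose proof (Hf x y ltac:(lra) H2 H). specialize (IH y ltac:(lra) H3). lra. }
  specialize (Htv l c (Rle_refl c) Hl). pose proof (total_length_nonneg _ _ _ Hl).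
  apply Rle_lt_trans with ((K + 1) * total_length l); [nra|].
  replace eps with ((K + 1) * (eps / (K + 1))) by (field; lra).
  apply Rmult_lt_compat_l; lra.
Qed.

Lemma AC_of_bounded_deriv a b f f' K : a <= b -> has_deriv_on a b f f' ->
  (forall x, a <= x <= b -> Rabs (f' x) <= K) -> abs_continuous_on a b f.
Proof.
  intros Hab H HK. assert (0 <= K) by (eapply Rle_trans; [apply Rabs_pos|apply (HK a)]; lra).
  apply (AC_of_lipschitz a b f (K + 1)); [lra|].
  exact (lipschitz_of_deriv a b f f' K H HK).
Qed.

Lemma AC_minus c d f g : abs_continuous_on c d f -> abs_continuous_on c d g ->
  abs_continuous_on c d (fun x => f x - g x).
Proof.
  intros Hf Hg eps Heps.
  destruct (Hf (eps / 2) ltac:(lra)) as [d1 [Hd1 H1]].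
  destruct (Hg (eps / 2) ltac:(lra)) as [d2 [Hd2 H2]].
  exists (Rmin d1 d2). split; [apply Rmin_glb_lt; auto|]. intros l Hl Hlen.
  pose proof (Rmin_l d1 d2). pose proof (Rmin_r d1 d2).
  specialize (H1 l Hl ltac:(lra)). specialize (H2 l Hl ltac:(lra)).
  enough (total_variation (fun x => f x - g x) l <= total_variation f l + total_variation g l)
    by lra.
  clear. induction l as [|[x y] t IH]; simpl; [lra|].
  replace (f y - g y - (f x - g x)) with ((f y - f x) + - (g y - g x)) by ring.
  pose proof (Rabs_triang (f y - f x) (- (g y - g x))). rewrite Rabs_Ropp in H. lra.
Qed.

Lemma total_variation_mult c d f g F G :
  (forall z, c <= z <= d -> Rabs (f z) <= F) -> (forall z, c <= z <= d -> Rabs (g z) <= G) ->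
  forall l lo, c <= lo -> nonoverlap lo l d ->
  total_variation (fun x => f x * g x) l <= G * total_variation f l + F * total_variation g l.
Proof.
  intros Hf Hg. induction l as [|[x y] t IH]; simpl; intros lo Hlo Hn; [lra|].
  destruct Hn as [H1 [H2 H3]]. pose proof (nonoverlap_le _ _ _ H3).
  specialize (IH y ltac:(lra) H3).
  replace (f y * g y - f x * g x) with ((f y - f x) * g y + f x * (g y - g x)) by ring.
  pose proof (Rabs_triang ((f y - f x) * g y) (f x * (g y - g x))) as Htri.
  rewrite !Rabs_mult in Htri.
  pose proof (Hg y ltac:(lra)). pose proof (Hf x ltac:(lra)).
  pose proof (Rabs_pos (f y - f x)). pose proof (Rabs_pos (g y - g x)).
  assert (Rabs (f y - f x) * Rabs (g y) <= Rabs (f y - f x) * G) by (apply Rmult_le_compat_l; lra).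
  assert (Rabs (f x) * Rabs (g y - g x) <= F * Rabs (g y - g x)) by (apply Rmult_le_compat_r; lra).
  nra.
Qed.

Lemma AC_mult c d f g : c <= d -> abs_continuous_on c d f -> abs_continuous_on c d g ->
  abs_continuous_on c d (fun x => f x * g x).
Proof.
  intros Hcd Hf Hg eps Heps.
  destruct (AC_bounded c d f Hcd Hf) as [F HF]. destruct (AC_bounded c d g Hcd Hg) as [G HG].
  assert (0 <= F) by (eapply Rle_trans; [apply Rabs_pos|apply (HF c)]; lra).
  assert (0 <= G) by (eapply Rle_trans; [apply Rabs_pos|apply (HG c)]; lra).
  destruct (Hf (eps / (2 * (G + 1)))) as [d1 [Hd1 H1]]; [apply Rdiv_lt_0_compat; lra|].
  destruct (Hg (eps / (2 * (F + 1)))) as [d2 [Hd2 H2]]; [apply Rdiv_lt_0_compat; lra|].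
  exists (Rmin d1 d2). split; [apply Rmin_glb_lt; auto|]. intros l Hl Hlen.
  pose proof (Rmin_l d1 d2). pose proof (Rmin_r d1 d2).
  specialize (H1 l Hl ltac:(lra)). specialize (H2 l Hl ltac:(lra)).
  pose proof (total_variation_mult c d f g F G HF HG l c (Rle_refl c) Hl).
  assert (G * total_variation f l < eps / 2).
  { pose proof (total_variation_nonneg f l).
    apply Rle_lt_trans with ((G + 1) * total_variation f l); [nra|].
    replace (eps / 2) with ((G + 1) * (eps / (2 * (G + 1)))) by (field; lra).
    apply Rmult_lt_compat_l; lra. }
  assert (F * total_variation g l < eps / 2).
  { pose proof (total_variation_nonneg g l).
    apply Rle_lt_trans with ((F + 1) * total_variation g l); [nra|].
    replace (eps / 2) with ((F + 1) * (eps / (2 * (F + 1)))) by (field; lra).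
    apply Rmult_lt_compat_l; lra. }
  lra.
Qed.

Definition const_coeff_solution (a b mu : R) (u u' : R -> R) : Prop :=
  has_deriv_on a b u u' /\ abs_continuous_on a b u' /\
  exists N, null_set N /\
    forall x, a < x < b -> ~ N x -> derivable_pt_lim u' x (- mu * u x).

Lemma const_coeff_solution_on_piece a b w q lam u u' N al be mu :
  has_deriv_on a b u u' -> abs_continuous_on a b u' -> null_set N ->
  (forall x, a < x < b -> ~ N x -> derivable_pt_lim u' x (- (lam * w x + q x) * u x)) ->
  a <= al -> be <= b -> (forall x, al < x < be -> lam * w x + q x = mu) ->
  const_coeff_solution al be mu u u'.
Proof.
  intros Hu Hu' HN Heq Hal Hbe Hmu.
  split; [eapply has_deriv_on_restrict; eauto|].
  split; [eapply AC_restrict; eauto|].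
  exists N. split; auto. intros x Hx HNx. rewrite <- (Hmu x Hx). apply Heq; auto; lra.
Qed.

(** The Wronskian of a weak solution u and a classical solution phi of
    y'' + mu y = 0 is constant: it is absolutely continuous with derivative
    u' phi' + u (- mu phi) - (- mu u) phi - u' phi' = 0 almost everywhere. *)
Lemma wronskian_const a b mu u u' phi phi' : a < b ->
  const_coeff_solution a b mu u u' ->
  (forall x, derivable_pt_lim phi x (phi' x)) ->
  (forall x, derivable_pt_lim phi' x (- mu * phi x)) ->
  forall x z, a <= x <= b -> a <= z <= b ->
    u x * phi' x - u' x * phi x = u z * phi' z - u' z * phi z.
Proof.
  intros Hab [Hu [Hu' [N [HN Heq]]]] Hphi Hphi'.
  assert (Dphi := has_deriv_on_of_deriv a b _ _ Hphi).
  assert (Dphi' := has_deriv_on_of_deriv a b _ _ Hphi').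
  assert (ACu : abs_continuous_on a b u).
  { destruct (AC_bounded a b u' ltac:(lra) Hu') as [K HK].
    exact (AC_of_bounded_deriv a b u u' K ltac:(lra) Hu HK). }
  assert (ACphi : abs_continuous_on a b phi).
  { destruct (has_deriv_on_bounded a b phi' _ ltac:(lra) Dphi') as [K HK].
    exact (AC_of_bounded_deriv a b phi phi' K ltac:(lra) Dphi HK). }
  assert (ACphi' : abs_continuous_on a b phi').
  { destruct (has_deriv_on_bounded a b phi phi' ltac:(lra) Dphi) as [K HK].
    apply (AC_of_bounded_deriv a b phi' _ (Rabs mu * K) ltac:(lra) Dphi').
    intros x Hx. rewrite Rabs_mult, Rabs_Ropp.
    apply Rmult_le_compat_l; [apply Rabs_pos|auto]. }
  apply (AC_zero_deriv_const a b (fun x => u x * phi' x - u' x * phi x) N Hab); auto.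
  - apply AC_minus; apply AC_mult; auto; lra.
  - intros t Ht HNt.
    pose proof (derivable_pt_lim_minus _ _ t _ _
      (derivable_pt_lim_mult _ _ t _ _ (has_deriv_on_interior a b u u' t Hu Ht) (Hphi' t))
      (derivable_pt_lim_mult _ _ t _ _ (Heq t Ht HNt) (Hphi t))) as HW.
    replace 0 with (u' t * phi' t + u t * (- mu * phi t) -
                    (- mu * u t * phi t + u' t * phi' t)) by ring.
    exact HW.
Qed.

(** The fundamental solutions of y'' + mu y = 0: [gsin mu] with y(0) = 0,
    y'(0) = 1 and [gcos mu] with y(0) = 1, y'(0) = 0 (trigonometric,
    hyperbolic or polynomial according to the sign of mu). *)
Definition gsin (mu t : R) : R :=
  if Rlt_dec 0 mu then sin (sqrt mu * t) / sqrt mu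
  else if Rlt_dec mu 0
  then (exp (sqrt (- mu) * t) - exp (- (sqrt (- mu) * t))) / (2 * sqrt (- mu))
  else t.

Definition gcos (mu t : R) : R :=
  if Rlt_dec 0 mu then cos (sqrt mu * t)
  else if Rlt_dec mu 0 then (exp (sqrt (- mu) * t) + exp (- (sqrt (- mu) * t))) / 2
  else 1.

Lemma gsin_deriv mu t : derivable_pt_lim (gsin mu) t (gcos mu t).
Proof.
  apply is_derive_Reals. unfold gsin, gcos.
  destruct (Rlt_dec 0 mu); [|destruct (Rlt_dec mu 0)].
  - assert (0 < sqrt mu) by (apply sqrt_lt_R0; auto). auto_derive; auto. field. lra.
  - assert (0 < sqrt (- mu)) by (apply sqrt_lt_R0; lra). auto_derive; auto. field. lra.
  - auto_derive; auto.
Qed.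

Lemma gcos_deriv mu t : derivable_pt_lim (gcos mu) t (- mu * gsin mu t).
Proof.
  apply is_derive_Reals. unfold gsin, gcos.
  destruct (Rlt_dec 0 mu); [|destruct (Rlt_dec mu 0)].
  - assert (0 < sqrt mu) by (apply sqrt_lt_R0; auto).
    pose proof (sqrt_sqrt mu ltac:(lra)) as Hk.
    auto_derive; auto. set (k := sqrt mu) in *. rewrite <- Hk. field. lra.
  - assert (0 < sqrt (- mu)) by (apply sqrt_lt_R0; lra).
    pose proof (sqrt_sqrt (- mu) ltac:(lra)) as Hk.
    auto_derive; auto. set (k := sqrt (- mu)) in *. replace mu with (- (k * k)) by lra.
    field. lra.
  - auto_derive; auto. replace mu with 0 by lra. ring.
Qed.

Lemma gsin_gcos_energy mu t : gcos mu t ^ 2 + mu * gsin mu t ^ 2 = 1.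
Proof.
  unfold gsin, gcos. destruct (Rlt_dec 0 mu); [|destruct (Rlt_dec mu 0)].
  - assert (0 < sqrt mu) by (apply sqrt_lt_R0; auto).
    pose proof (sqrt_sqrt mu ltac:(lra)) as Hk. rewrite <- Hk at 2.
    pose proof (sin2_cos2 (sqrt mu * t)) as Hsc. unfold Rsqr in Hsc.
    field_simplify; [|lra]. lra.
  - assert (0 < sqrt (- mu)) by (apply sqrt_lt_R0; lra).
    pose proof (sqrt_sqrt (- mu) ltac:(lra)) as Hk.
    assert (E : exp (sqrt (- mu) * t) * exp (- (sqrt (- mu) * t)) = 1)
      by (rewrite <- exp_plus, Rplus_opp_r; apply exp_0).
    set (k := sqrt (- mu)) in *. set (e1 := exp (k * t)) in *. set (e2 := exp (- (k * t))) in *.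
    replace mu with (- (k * k)) by lra.
    field_simplify; [|lra]. replace (16 * e1 * e2 * k ^ 2) with (16 * k ^ 2 * (e1 * e2)) by ring.
    rewrite E. field. lra.
  - replace mu with 0 by lra. ring.
Qed.

Lemma gsin_0 mu : gsin mu 0 = 0.
Proof.
  unfold gsin. destruct (Rlt_dec 0 mu); [|destruct (Rlt_dec mu 0)]; auto.
  - rewrite Rmult_0_r, sin_0. field. apply Rgt_not_eq, sqrt_lt_R0; auto.
  - rewrite Rmult_0_r, Ropp_0, Rminus_diag. field. apply Rgt_not_eq, sqrt_lt_R0; lra.
Qed.

Lemma gcos_0 mu : gcos mu 0 = 1.
Proof.
  unfold gcos. destruct (Rlt_dec 0 mu); [|destruct (Rlt_dec mu 0)]; auto.
  - rewrite Rmult_0_r, cos_0. auto.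
  - rewrite Rmult_0_r, Ropp_0, exp_0. field.
Qed.

Lemma shift_deriv f f' x0 x : derivable_pt_lim f (x - x0) (f' (x - x0)) ->
  derivable_pt_lim (fun x => f (x - x0)) x (f' (x - x0)).
Proof.
  intro H. replace (f' (x - x0)) with (f' (x - x0) * 1) by ring.
  apply (derivable_pt_lim_comp (fun x => x - x0) f); auto.
  replace 1 with (1 - 0) by ring.
  apply derivable_pt_lim_minus; [apply derivable_pt_lim_id|apply derivable_pt_lim_const].
Qed.

(** Uniqueness for the Cauchy problem at a zero x0 of u:
    u = u'(x0) gsin(. - x0), obtained from the two Wronskians of u with
    gsin(. - x0) and gcos(. - x0). *)
Lemma const_coeff_solution_explicit a b mu u u' x0 : a < b ->
  const_coeff_solution a b mu u u' -> a <= x0 <= b -> u x0 = 0 ->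
  forall x, a <= x <= b ->
    u x = u' x0 * gsin mu (x - x0) /\ u' x = u' x0 * gcos mu (x - x0).
Proof.
  intros Hab Hsol Hx0 Hu0 x Hx.
  assert (Ds : forall x, derivable_pt_lim (fun x => gsin mu (x - x0)) x (gcos mu (x - x0)))
    by (intro; apply shift_deriv, gsin_deriv).
  assert (Dc : forall x, derivable_pt_lim (fun x => gcos mu (x - x0)) x (- mu * gsin mu (x - x0)))
    by (intro; apply (shift_deriv (gcos mu) (fun t => - mu * gsin mu t)), gcos_deriv).
  assert (Dc' : forall x, derivable_pt_lim (fun x => - mu * gsin mu (x - x0)) x
                                           (- mu * gcos mu (x - x0)))
    by (intro; apply (derivable_pt_lim_scal (fun x => gsin mu (x - x0))), Ds).
  pose proof (wronskian_const a b mu u u' _ _ Hab Hsol Ds Dc x x0 Hx Hx0) as W1.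
  pose proof (wronskian_const a b mu u u' _ _ Hab Hsol Dc Dc' x x0 Hx Hx0) as W2.
  simpl in W1, W2. rewrite Rminus_diag, gsin_0, gcos_0, Hu0 in W1, W2.
  pose proof (gsin_gcos_energy mu (x - x0)) as E.
  set (s := gsin mu (x - x0)) in *. set (c := gcos mu (x - x0)) in *.
  (* solve the linear system  u c - u' s = 0,  mu u s + u' c = u'(x0) *)
  assert (W1' : u x * c - u' x * s = 0) by lra.
  assert (W2' : u' x0 = mu * u x * s + u' x * c) by lra.
  rewrite W2'. split.
  - transitivity (u x * (c ^ 2 + mu * s ^ 2)); [rewrite E; ring|].
    transitivity ((mu * u x * s + u' x * c) * s + c * (u x * c - u' x * s)); [ring|].
    rewrite W1'. ring.
  - transitivity (u' x * (c ^ 2 + mu * s ^ 2)); [rewrite E; ring|].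
    transitivity ((mu * u x * s + u' x * c) * c - mu * s * (u x * c - u' x * s)); [ring|].
    rewrite W1'. ring.
Qed.

Lemma gsin_sq_continuous mu x : continuous (fun t => gsin mu t ^ 2) x.
Proof.
  apply (@ex_derive_continuous R_AbsRing R_NormedModule).
  eexists. apply is_derive_Reals.
  apply (derivable_pt_lim_comp (gsin mu) (fun x => x ^ 2));
    [apply gsin_deriv|apply derivable_pt_lim_pow].
Qed.

Lemma gsin_sq_integral mu a b : mu <> 0 ->
  is_RInt (fun t => gsin mu t ^ 2) a b
    ((b - gsin mu b * gcos mu b) / (2 * mu) - (a - gsin mu a * gcos mu a) / (2 * mu)).
Proof.
  intro Hmu.
  apply (is_RInt_derive (fun t => (t - gsin mu t * gcos mu t) / (2 * mu)));
    [|intros; apply gsin_sq_continuous].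
  intros t _. apply is_derive_Reals.
  pose proof (derivable_pt_lim_mult _ _ t _ _
    (derivable_pt_lim_minus _ _ t _ _ (derivable_pt_lim_id t)
       (derivable_pt_lim_mult _ _ t _ _ (gsin_deriv mu t) (gcos_deriv mu t)))
    (derivable_pt_lim_const (/ (2 * mu)) t)) as H.
  replace (gsin mu t ^ 2) with
    ((1 - (gcos mu t * gcos mu t + gsin mu t * (- mu * gsin mu t))) * / (2 * mu) +
     (t - gsin mu t * gcos mu t) * 0); [exact H|].
  pose proof (gsin_gcos_energy mu t).
  replace (gcos mu t * gcos mu t) with (1 - mu * gsin mu t ^ 2) by lra. field. auto.
Qed.

Lemma gsin_sq_integral_0 a b : is_RInt (fun t => gsin 0 t ^ 2) a b (b ^ 3 / 3 - a ^ 3 / 3).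
Proof.
  apply (is_RInt_derive (fun t => t ^ 3 / 3)); [|intros; apply gsin_sq_continuous].
  intros t _. unfold gsin. destruct (Rlt_dec 0 0); [lra|]. destruct (Rlt_dec 0 0); [lra|].
  auto_derive; auto. field.
Qed.

Lemma le_tan k : 0 < k -> k < PI / 2 -> k * cos k <= sin k.
Proof.
  intros H1 H2.
  destruct (MVT_cor2 (fun x => sin x - x * cos x) (fun x => x * sin x) 0 k H1) as [c [Hc Hc2]].
  - intros c _. apply is_derive_Reals. auto_derive; auto. ring.
  - rewrite sin_0, cos_0 in Hc.
    assert (0 < sin c) by (apply sin_gt_0; pose proof PI_RGT_0; lra).
    assert (0 < c * sin c * (k - 0)) by (repeat apply Rmult_lt_0_compat; lra). lra.
Qed.

Lemma tanh_le k : 0 < k -> exp k - exp (- k) <= k * (exp k + exp (- k)).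
Proof.
  intros H1.
  destruct (MVT_cor2 (fun x => x * (exp x + exp (- x)) - (exp x - exp (- x)))
              (fun x => x * (exp x - exp (- x))) 0 k H1) as [c [Hc Hc2]].
  - intros c _. apply is_derive_Reals. auto_derive; auto. ring.
  - rewrite Ropp_0, exp_0 in Hc. assert (exp (- c) < exp c) by (apply exp_increasing; lra).
    assert (0 < c * (exp c - exp (- c)) * (k - 0)) by (repeat apply Rmult_lt_0_compat; lra).
    lra.
Qed.

(** Below the first Dirichlet eigenvalue pi^2/4 of [-1,0], gsin has no zero
    in [-1,0), gcos stays positive, and mu (gcos + gsin)(-1) <= 0. *)
Lemma gsin_gcos_at_neg1 mu : mu < PI ^ 2 / 4 ->
  gsin mu (-1) < 0 /\ 0 < gcos mu (-1) /\ mu * (gcos mu (-1) + gsin mu (-1)) <= 0.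
Proof.
  intro Hmu. pose proof PI_RGT_0. unfold gsin, gcos.
  destruct (Rlt_dec 0 mu); [|destruct (Rlt_dec mu 0)].
  - pose proof (sqrt_sqrt mu ltac:(lra)). pose proof (sqrt_lt_R0 mu r).
    set (k := sqrt mu) in *.
    assert (Hk : k < PI / 2) by nra.
    replace (k * -1) with (- k) by ring. rewrite sin_neg, cos_neg.
    assert (0 < sin k) by (apply sin_gt_0; lra).
    assert (0 < cos k) by (apply cos_gt_0; lra).
    pose proof (le_tan k ltac:(lra) Hk).
    assert (0 < / k) by (apply Rinv_0_lt_compat; lra).
    split; [unfold Rdiv; nra|split; auto].
    replace (cos k + - sin k / k) with (- ((sin k - k * cos k) * / k)) by (field; lra).
    assert (0 <= (sin k - k * cos k) * / k) by (apply Rmult_le_pos; lra). nra.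
  - pose proof (sqrt_lt_R0 (- mu) ltac:(lra)). set (k := sqrt (- mu)) in *.
    replace (k * -1) with (- k) by ring. rewrite Ropp_involutive.
    pose proof (tanh_le k ltac:(lra)).
    assert (exp (- k) < exp k) by (apply exp_increasing; lra).
    pose proof (exp_pos (- k)).
    assert (0 < / (2 * k)) by (apply Rinv_0_lt_compat; lra).
    split; [unfold Rdiv; nra|split; [lra|]].
    replace ((exp (- k) + exp k) / 2 + (exp (- k) - exp k) / (2 * k)) with
      ((k * (exp k + exp (- k)) - (exp k - exp (- k))) * / (2 * k)) by (field; lra).
    assert (0 <= (k * (exp k + exp (- k)) - (exp k - exp (- k))) * / (2 * k))
      by (apply Rmult_le_pos; lra).
    nra.
  - lra.
Qed.

(** On the right half [0,1] (shifted to [-1,0]) the mass of gsin^2 is at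
    most half the square of its boundary value at -1. *)
Lemma gsin_sq_integral_right mu : mu < PI ^ 2 / 4 ->
  exists I, is_RInt (fun t => gsin mu t ^ 2) (-1) 0 I /\ I <= gsin mu (-1) ^ 2 / 2.
Proof.
  intro Hmu. destruct (Req_dec mu 0) as [->|Hne].
  - eexists. split; [apply gsin_sq_integral_0|].
    unfold gsin. destruct (Rlt_dec 0 0); [lra|]. destruct (Rlt_dec 0 0); [lra|]. lra.
  - eexists. split; [apply gsin_sq_integral; auto|].
    destruct (gsin_gcos_at_neg1 mu Hmu) as [Hs [Hc Hsc]].
    rewrite gsin_0, gcos_0. pose proof (gsin_gcos_energy mu (-1)) as E.
    set (s := gsin mu (-1)) in *. set (c := gcos mu (-1)) in *.
    assert (Hmu2 : 0 < / (2 * mu ^ 2)) by (apply Rinv_0_lt_compat; nra).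
    assert (c * (mu * (c + s)) <= 0) by nra.
    replace ((0 - 0 * 1) / (2 * mu) - (-1 - s * c) / (2 * mu)) with
      (s ^ 2 / 2 + c * (mu * (c + s)) * / (2 * mu ^ 2)).
    + nra.
    + replace (-1 - s * c) with (- (c ^ 2 + mu * s ^ 2) - s * c) by lra. field. auto.
Qed.

Lemma gsin_sq_integral_left mu : 0 < mu ->
  exists J, is_RInt (fun t => gsin mu t ^ 2) 0 1 J /\ 2 * mu * J = 1 - gsin mu 1 * gcos mu 1.
Proof.
  intro H. eexists. split; [apply gsin_sq_integral; lra|]. rewrite gsin_0, gcos_0. field. lra.
Qed.

Lemma w_sign_nonneg x : 0 <= x -> w_sign x = 1.
Proof. intro H. unfold w_sign. destruct (Rle_dec 0 x); [auto|lra]. Qed.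

Lemma w_sign_neg x : x < 0 -> w_sign x = -1.
Proof. intro H. unfold w_sign. destruct (Rle_dec 0 x); [lra|auto]. Qed.

Lemma solution_halves q0 lam u :
  is_solution (-1) 1 w_sign (fun _ => - q0) lam u -> u (-1) = 0 -> u 1 = 0 ->
  exists B D,
    (forall x, 0 <= x <= 1 -> u x = B * gsin (lam - q0) (x - 1)) /\
    (forall x, -1 <= x <= 0 -> u x = D * gsin (- lam - q0) (x + 1)) /\
    B * gsin (lam - q0) (-1) = D * gsin (- lam - q0) 1 /\
    B * gcos (lam - q0) (-1) = D * gcos (- lam - q0) 1.
Proof.
  intros [u' [Hu [Hu' [N [HN Heq]]]]] Hum1 Hu1.
  assert (SR : const_coeff_solution 0 1 (lam - q0) u u').
  { apply (const_coeff_solution_on_piece (-1) 1 w_sign (fun _ => - q0) lam u u' N);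
      auto; try lra.
    intros x Hx. rewrite w_sign_nonneg by lra. ring. }
  assert (SL : const_coeff_solution (-1) 0 (- lam - q0) u u').
  { apply (const_coeff_solution_on_piece (-1) 1 w_sign (fun _ => - q0) lam u u' N);
      auto; try lra.
    intros x Hx. rewrite w_sign_neg by lra. ring. }
  pose proof (const_coeff_solution_explicit 0 1 _ u u' 1 ltac:(lra) SR ltac:(lra) Hu1) as ER.
  pose proof (const_coeff_solution_explicit (-1) 0 _ u u' (-1) ltac:(lra) SL ltac:(lra) Hum1) as EL.
  exists (u' 1), (u' (-1)).
  destruct (ER 0 ltac:(lra)) as [R0 R0']. destruct (EL 0 ltac:(lra)) as [L0 L0'].
  replace (0 - 1) with (-1) in R0, R0' by ring. replace (0 - -1) with 1 in L0, L0' by ring.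
  repeat split; try lra.
  - intros x Hx. apply ER; auto.
  - intros x Hx. replace (x + 1) with (x - -1) by ring. apply EL; auto.
Qed.

Lemma is_RInt_sq_shift f g K x0 a b I : a <= b ->
  (forall x, a <= x <= b -> f x = K * g (x - x0)) ->
  is_RInt (fun t => g t ^ 2) (a - x0) (b - x0) I ->
  is_RInt (fun x => f x ^ 2) a b (K ^ 2 * I).
Proof.
  intros Hab Hf HI.
  assert (HI' : is_RInt (fun t => g t ^ 2) (1 * a + - x0) (1 * b + - x0) I)
    by (replace (1 * a + - x0) with (a - x0) by ring;
        replace (1 * b + - x0) with (b - x0) by ring; exact HI).
  eapply is_RInt_ext; [|exact (is_RInt_scal _ _ _ (K ^ 2) _ (is_RInt_comp_lin _ _ _ _ _ _ HI'))].
  intros x Hx. rewrite Rmin_left, Rmax_right in Hx by lra.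
  rewrite Hf by lra. unfold scal; simpl; unfold mult; simpl.
  replace (1 * x + - x0) with (x - x0) by ring. ring.
Qed.

(** A solution of y'' + mu y = 0 with y = D gsin, y' = D gcos vanishing
    together at a point is zero: D = 0 by the energy identity. *)
Lemma amplitude_zero mu D S C : C ^ 2 + mu * S ^ 2 = 1 -> D * S = 0 -> D * C = 0 -> D = 0.
Proof.
  intros E HS HC.
  assert (D ^ 2 = 0); [|nra].
  transitivity (D ^ 2 * (C ^ 2 + mu * S ^ 2)); [rewrite E; ring|].
  transitivity ((D * C) ^ 2 + mu * (D * S) ^ 2); [ring|]. rewrite HS, HC. ring.
Qed.

(** Core estimate for one real solution: the mass of u^2 on [0,1] does not
    exceed the mass on [-1,0], strictly unless u = 0.  With s, c the values
    of gsin, gcos at -1 on the right and B = u'(1):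
      2 mu_L (M - P) >= B^2 c (c - s),   and c (c - s) > 0. *)
Lemma half_masses_compare q0 lam u : q0 < - (PI ^ 2 / 4) -> lam < - Rabs q0 + PI ^ 2 / 4 ->
  is_solution (-1) 1 w_sign (fun _ => - q0) lam u -> u (-1) = 0 -> u 1 = 0 ->
  exists P M, is_RInt (fun x => u x ^ 2) 0 1 P /\ is_RInt (fun x => u x ^ 2) (-1) 0 M /\
    P <= M /\ ((exists x, -1 <= x <= 1 /\ u x <> 0) -> P < M).
Proof.
  intros Hq Hlam Hsol Hum1 Hu1. pose proof PI_RGT_0.
  rewrite Rabs_left in Hlam by nra.
  destruct (solution_halves q0 lam u Hsol Hum1 Hu1) as [B [D [HR [HL [Ms Mc]]]]].
  set (muR := lam - q0) in *. set (muL := - lam - q0) in *.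
  assert (HmuR : muR < PI ^ 2 / 4) by (unfold muR; lra).
  assert (HmuL : 0 < muL) by (unfold muL; nra).
  destruct (gsin_gcos_at_neg1 muR HmuR) as [Hs [Hc _]].
  destruct (gsin_sq_integral_right muR HmuR) as [I [HI HIle]].
  destruct (gsin_sq_integral_left muL HmuL) as [J [HJ HJe]].
  exists (B ^ 2 * I), (D ^ 2 * J).
  assert (HP : is_RInt (fun x => u x ^ 2) 0 1 (B ^ 2 * I)).
  { apply (is_RInt_sq_shift u (gsin muR) B 1); [lra|exact HR|].
    replace (0 - 1) with (-1) by ring. replace (1 - 1) with 0 by ring. exact HI. }
  assert (HM : is_RInt (fun x => u x ^ 2) (-1) 0 (D ^ 2 * J)).
  { apply (is_RInt_sq_shift u (gsin muL) D (-1)); [lra| |].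
    - intros x Hx. replace (x - -1) with (x + 1) by ring. auto.
    - replace (-1 - -1) with 0 by ring. replace (0 - -1) with 1 by ring. exact HJ. }
  set (s := gsin muR (-1)) in *. set (c := gcos muR (-1)) in *.
  pose proof (gsin_gcos_energy muL 1) as E1.
  (* the left mass in terms of the right boundary data, by matching at 0 *)
  assert (EM : 2 * muL * (D ^ 2 * J) = (B * c) ^ 2 + muL * (B * s) ^ 2 - (B * s) * (B * c)).
  { rewrite Ms, Mc. transitivity (D ^ 2 * (2 * muL * J)); [ring|]. rewrite HJe.
    transitivity (D ^ 2 * (gcos muL 1 ^ 2 + muL * gsin muL 1 ^ 2)
                  - D ^ 2 * (gsin muL 1 * gcos muL 1)); [rewrite E1|]; ring. }
  assert (EP : B ^ 2 * I <= B ^ 2 * (s ^ 2 / 2)) by (apply Rmult_le_compat_l; nra).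
  assert (Gap : B ^ 2 * (c * (c - s)) <= 2 * muL * (D ^ 2 * J - B ^ 2 * I)) by nra.
  assert (Hcs : 0 < c * (c - s)) by nra.
  split; [|split; [|split]]; auto.
  - assert (0 <= B ^ 2 * (c * (c - s))) by (apply Rmult_le_pos; nra). nra.
  - intros [x [Hx Hux]].
    assert (HB : B <> 0).
    { intro HB0. apply Hux.
      destruct (Rle_lt_dec 0 x).
      - rewrite HR, HB0 by lra. ring.
      - rewrite HL by lra.
        rewrite (amplitude_zero muL D (gsin muL 1) (gcos muL 1) E1); [ring| |];
          [rewrite <- Ms|rewrite <- Mc]; rewrite HB0; ring. }
    assert (0 < B ^ 2 * (c * (c - s))) by (apply Rmult_lt_0_compat; [apply pow2_gt_0|]; auto).
    nra.
Qed.

Theorem mainTheorem5 (q0 : R) (hq0 : q0 < - (PI ^ 2 / 4)) :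
  richardson_minus_ge (-1) 1 w_sign (fun _ => - q0) (- Rabs q0 + PI ^ 2 / 4).
Proof.
  intros c' Hc'. exists (- Rabs q0 + PI ^ 2 / 4). split; auto.
  intros lam u1 u2 Hlam [S1 [S2 [H1a [H2a [H1b [H2b Hex]]]]]].
  destruct (half_masses_compare q0 lam u1 hq0 Hlam S1 H1a H1b)
    as [P1 [M1 [HP1 [HM1 [Hle1 Hlt1]]]]].
  destruct (half_masses_compare q0 lam u2 hq0 Hlam S2 H2a H2b)
    as [P2 [M2 [HP2 [HM2 [Hle2 Hlt2]]]]].
  set (f := fun x => w_sign x * (u1 x ^ 2 + u2 x ^ 2)).
  (* int_{-1}^1 w |u|^2 = (P1 + P2) - (M1 + M2) *)
  assert (HL : is_RInt f (-1) 0 (opp (plus M1 M2))).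
  { eapply is_RInt_ext; [|exact (is_RInt_opp _ _ _ _ (is_RInt_plus _ _ _ _ _ _ HM1 HM2))].
    intros x Hx. rewrite Rmin_left, Rmax_right in Hx by lra.
    unfold f. rewrite w_sign_neg by lra. unfold opp, plus; simpl. ring. }
  assert (HR : is_RInt f 0 1 (plus P1 P2)).
  { eapply is_RInt_ext; [|exact (is_RInt_plus _ _ _ _ _ _ HP1 HP2)].
    intros x Hx. rewrite Rmin_left, Rmax_right in Hx by lra.
    unfold f. rewrite w_sign_nonneg by lra. unfold plus; simpl. ring. }
  pose proof (is_RInt_Chasles _ _ _ _ _ _ HL HR) as HT.
  exists (ex_RInt_Reals_0 _ _ _ (ex_intro _ _ HT)).
  rewrite <- RInt_Reals, (is_RInt_unique _ _ _ _ HT).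
  change (- (M1 + M2) + (P1 + P2) < 0).
  destruct Hex as [x [Hx [Hu|Hu]]].
  - specialize (Hlt1 (ex_intro _ x (conj Hx Hu))). lra.
  - specialize (Hlt2 (ex_intro _ x (conj Hx Hu))). lra.
Qed.
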